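(* Let $K$ be a finite field, $\kappa$ an infinite cardinal, $(R_\alpha\mid\alpha<\kappa)$ a sequence of $K$-algebras, $P=\prod_{\alpha<\kappa}R_\alpha$ and $I=\bigoplus_{\alpha<\kappa}R_\alpha\subseteq P$. Let $R$ be a subring of $P$ with $1_R=1_P$, containing $I$ as an ideal, such that there is a ring isomorphism $\varphi:R/I\cong K$. Then $R$ is a semidirect product of $I$ and $K$, i.e., there exist ring homomorphisms $\pi:R\to K$ surjective with $\mathrm{Ker}\,\pi=I$ and $\nu:K\to R$ with $\pi\nu=\mathrm{id}_K$.
   Context: Rings are unital and ring homomorphisms preserve units. *)

From HB Require Import structures.
From mathcomp Require Import all_boot all_algebra.
From Stdlib Require Import List.
Set Implicit Arguments. Unset Strict Implicit. Unset Printing Implicit Defensive.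
Import GRing.Theory.
Local Open Scope ring_scope.

Definition infinite_type (A : Type) : Prop :=
  ~ (exists s : list A, forall a : A, List.In a s).

(* A K-algebra (K commutative) : a (unital, possibly zero) ring S together
   with a unital ring morphism K -> S whose image is central. *)
Definition central_structure (K : fieldType) (S : pzRingType)
  (f : {rmorphism K -> S}) : Prop :=
  forall (k : K) (x : S), f k * x = x * f k.

Section Product.
Variables (A : Type) (R : A -> pzRingType).
Definition prodR := forall a : A, R a.
Definition p0 : prodR := fun a => 0.
Definition p1 : prodR := fun a => 1.
Definition padd (x y : prodR) : prodR := fun a => x a + y a.
Definition popp (x : prodR) : prodR := fun a => - x a.
Definition pmul (x y : prodR) : prodR := fun a => x a * y a.

Definition in_dsum (x : prodR) : Prop :=
  exists s : list A, forall a : A, ~ List.In a s -> x a = 0.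

Definition is_subring (S : prodR -> Prop) : Prop :=
  [/\ S p1,
      forall x y, S x -> S y -> S (padd x y),
      forall x, S x -> S (popp x) &
      forall x y, S x -> S y -> S (pmul x y)].

(* f : S -> T (represented as a function on P, only its values on S matter)
   is a unital ring homomorphism from the subring S. *)
Definition subring_hom (T : pzRingType) (S : prodR -> Prop) (f : prodR -> T)
  : Prop :=
  [/\ f p1 = 1,
      forall x y, S x -> S y -> f (padd x y) = f x + f y &
      forall x y, S x -> S y -> f (pmul x y) = f x * f y].

Definition hom_into_subring (T : pzRingType) (S : prodR -> Prop)
  (g : T -> prodR) : Prop :=
  [/\ forall t, S (g t),
      g 1 = p1,
      forall t u, g (t + u) = padd (g t) (g u) &
      forall t u, g (t * u) = pmul (g t) (g u)].

Definition surj_ker_dsum (T : pzRingType) (S : prodR -> Prop) (f : prodR -> T)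
  : Prop :=
  (forall t : T, exists x, S x /\ f x = t) /\
  (forall x, S x -> (f x = 0 <-> in_dsum x)).
End Product.

From HB Require Import structures.
From mathcomp Require Import all_boot all_algebra.
From Stdlib Require Import ClassicalEpsilon FunctionalExtensionality.
Set Implicit Arguments. Unset Strict Implicit. Unset Printing Implicit Defensive.
Import GRing.Theory.
Local Open Scope ring_scope.

(* Pick any lift [x : K -> R] of [phi]. The defects [x (t + u) - x t - x u],
   [x (t * u) - x t * x u] and [x 1 - 1] lie in the direct sum, and since [K]
   is finite there are only finitely many of them, so they all vanish outside
   one finite set [F] of indices: off [F], every coordinate of [x] is already
   a ring morphism. Replacing the coordinates in [F] by the structure maps
   [K -> R a] yields a ring morphism [nu : K -> R] that differs from [x] by an
   element of [I], hence still lifts [phi]. Neither the infinity of the index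
   set nor the centrality of the structure maps is needed. *)

Section Product.
Variables (A : Type) (R : A -> pzRingType).
Local Notation P := (prodR R).

Definition psub (x y : P) : P := padd x (popp y).

Definition agree_off (s : list A) (x y : P) : Prop :=
  forall a, ~ List.In a s -> x a = y a.

Lemma agree_off_catl s s' x y : agree_off s x y -> agree_off (s ++ s') x y.
Proof. by move=> xy a /List.in_app_iff nin; apply: xy => ?; apply: nin; left. Qed.

Lemma agree_off_catr s s' x y : agree_off s' x y -> agree_off (s ++ s') x y.
Proof. by move=> xy a /List.in_app_iff nin; apply: xy => ?; apply: nin; right. Qed.

Lemma in_dsum_psubP x y : in_dsum (psub x y) <-> exists s, agree_off s x y.
Proof.
split=> -[s xy]; exists s => a /xy; rewrite /psub /padd /popp.
  by move/eqP; rewrite subr_eq0 => /eqP.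
by move->; rewrite subrr.
Qed.

Lemma agree_off_finite (J : finType) (f g : J -> P) :
  (forall j, exists s, agree_off s (f j) (g j)) ->
  exists s, forall j, agree_off s (f j) (g j).
Proof.
move=> fg.
suff [s sP] : exists s, forall j, j \in enum J -> agree_off s (f j) (g j).
  by exists s => j; apply: sP; rewrite mem_enum.
elim: (enum J) => [|j js [s sP]]; first by exists nil.
have [s' s'P] := fg j; exists (s' ++ s) => i; rewrite in_cons => /orP [/eqP -> | ijs].
  exact: agree_off_catl.
exact/agree_off_catr/sP.
Qed.

Lemma psubKC x y : padd y (psub x y) = x.
Proof.
by apply: functional_extensionality_dep => a; rewrite /padd /psub /popp addrC subrK.
Qed.

Definition patch (F : list A) (y z : P) : P := fun a =>
  if excluded_middle_informative (List.In a F) then y a else z a.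

Lemma patch_in F y z a : List.In a F -> patch F y z a = y a.
Proof. by rewrite /patch; case: excluded_middle_informative. Qed.

Lemma patch_out F y z : agree_off F (patch F y z) z.
Proof. by move=> a; rewrite /patch; case: excluded_middle_informative. Qed.

Section Subring.
Variable S : P -> Prop.
Hypotheses (hS : is_subring S) (hI : forall x, in_dsum x -> S x).

Lemma subring_psub x y : S x -> S y -> S (psub x y).
Proof. by have [_ SD SN _] := hS => Sx Sy; apply/SD/SN. Qed.

Lemma subring0 : S (p0 R).
Proof. by apply: hI; exists nil. Qed.

Lemma subring_agree_off s x y : S y -> agree_off s x y -> S x.
Proof.
have [_ SD _ _] := hS => Sy xy; rewrite -(psubKC x y).
by apply: SD Sy _; apply/hI/in_dsum_psubP; exists s.
Qed.

Variables (T : pzRingType) (phi : P -> T).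
Hypotheses (hphi : subring_hom S phi) (hker : surj_ker_dsum S phi).

Lemma subring_hom0 : phi (p0 R) = 0.
Proof. by apply/(hker.2 _ subring0); exists nil. Qed.

Lemma subring_homB x y : S x -> S y -> phi (psub x y) = phi x - phi y.
Proof.
have [_ hD _] := hphi; have [_ _ SN _] := hS => Sx Sy.
rewrite hD //; last exact: SN.
congr (_ + _); apply/eqP; rewrite -subr_eq0 opprK addrC -hD //; last exact: SN.
suff -> : padd y (popp y) = p0 R by rewrite subring_hom0.
by apply: functional_extensionality_dep => a; rewrite /padd /popp subrr.
Qed.

Lemma subring_hom_eqP x y :
  S x -> S y -> phi x = phi y <-> exists s, agree_off s x y.
Proof.
move=> Sx Sy; rewrite -in_dsum_psubP -(hker.2 _ (subring_psub Sx Sy)).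
rewrite subring_homB //; split=> [-> | /eqP]; first exact: subrr.
by rewrite subr_eq0 => /eqP.
Qed.

Lemma subring_hom_lift :
  exists x : T -> P, forall t, S (x t) /\ phi (x t) = t.
Proof.
have [x xP] := ClassicalEpsilon.choice _ hker.1.
by exists x => t; have [] := xP t.
Qed.

End Subring.
End Product.

Section Splitting.
Variables (A : Type) (R : A -> pzRingType) (T : finPzRingType).
Variable alg : forall a : A, {rmorphism T -> R a}.
Variable S : prodR R -> Prop.
Hypotheses (hS : is_subring S) (hI : forall x, in_dsum x -> S x).
Variable phi : prodR R -> T.
Hypotheses (hphi : subring_hom S phi) (hker : surj_ker_dsum S phi).
Variable x : T -> prodR R.
Hypothesis hx : forall t, S (x t) /\ phi (x t) = t.

Lemma lift_hom_off_finite : exists F : list A,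
  [/\ agree_off F (x 1) (p1 R),
      forall t u, agree_off F (x (t + u)) (padd (x t) (x u)) &
      forall t u, agree_off F (x (t * u)) (pmul (x t) (x u))].
Proof.
have [h1 hD hM] := hphi; have [S1 SD _ SM] := hS.
have Sx t := (hx t).1; have phix t := (hx t).2.
have agree_of_phi y z : S y -> S z -> phi y = phi z -> exists s, agree_off s y z.
  by move=> Sy Sz /(subring_hom_eqP hS hI hphi hker Sy Sz).
have [s1 s1P] : exists s, agree_off s (x 1) (p1 R).
  by apply: agree_of_phi => //; rewrite phix h1.
have [sD sDP] : exists s, forall tu : T * T,
    agree_off s (x (tu.1 + tu.2)) (padd (x tu.1) (x tu.2)).
  apply: agree_off_finite => -[t u] /=.
  by apply: agree_of_phi; [|apply: SD|rewrite hD ?phix].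
have [sM sMP] : exists s, forall tu : T * T,
    agree_off s (x (tu.1 * tu.2)) (pmul (x tu.1) (x tu.2)).
  apply: agree_off_finite => -[t u] /=.
  by apply: agree_of_phi; [|apply: SM|rewrite hM ?phix].
exists (s1 ++ sD ++ sM); split=> [|t u|t u].
- exact: agree_off_catl.
- by apply/agree_off_catr/agree_off_catl; apply: (sDP (t, u)).
- by apply/agree_off_catr/agree_off_catr; apply: (sMP (t, u)).
Qed.

Lemma subring_hom_split :
  exists nu : T -> prodR R, hom_into_subring S nu /\ forall t, phi (nu t) = t.
Proof.
have [F [x1 xD xM]] := lift_hom_off_finite.
pose nu t := patch F (fun a => alg a t) (x t).
have nu_x t : agree_off F (nu t) (x t) by apply: patch_out.
have nu_alg t a : List.In a F -> nu t a = alg a t by apply: patch_in.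
have Snu t : S (nu t) := subring_agree_off hS hI (hx t).1 (nu_x t).
exists nu; split; last first.
  move=> t; rewrite -{2}((hx t).2).
  by apply/(subring_hom_eqP hS hI hphi hker (Snu t) (hx t).1); exists F.
split=> // [|t u|t u]; apply: functional_extensionality_dep => a;
  have [aF|aF] := excluded_middle_informative (List.In a F).
- by rewrite nu_alg // rmorph1.
- by rewrite nu_x // x1.
- by rewrite /padd !nu_alg // rmorphD.
- by rewrite /padd !nu_x // xD.
- by rewrite /pmul !nu_alg // rmorphM.
- by rewrite /pmul !nu_x // xM.
Qed.

End Splitting.

Theorem proposition4p7
  (K : finFieldType) (A : Type) (hA : infinite_type A)
  (R : A -> pzRingType) (alg : forall a : A, {rmorphism K -> R a})
  (halg : forall a : A, central_structure (alg a))
  (S : prodR R -> Prop) (hS : is_subring S)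
  (hI : forall x : prodR R, in_dsum x -> S x)
  (hquot : exists phi : prodR R -> K,
      subring_hom S phi /\ surj_ker_dsum S phi) :
  exists (pi : prodR R -> K) (nu : K -> prodR R),
    [/\ subring_hom S pi, surj_ker_dsum S pi,
        hom_into_subring S nu &
        forall k : K, pi (nu k) = k].
Proof.
have [phi [hphi hker]] := hquot.
have [x hx] := subring_hom_lift hker.
have [nu [hnu nuK]] := subring_hom_split alg hS hI hphi hker hx.
by exists phi, nu.
Qed.
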